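(* For every integer $n\ge 1$, $$C_n=\frac{1}{\pi}\int_0^{\infty}\frac{t^2}{\left(t^2+\frac14\right)^2}\left[\left(2-\frac{1}{\sqrt{t^2+\frac14}}\right)^{n-1}+\left(2+\frac{1}{\sqrt{t^2+\frac14}}\right)^{n-1}\right]\mathrm{d}t .$$
   Context: $C_n=\frac{1}{n+1}\binom{2n}{n}$ denotes the $n$-th Catalan number ($n\ge 0$). *)

From Stdlib Require Import Reals.
From Coquelicot Require Import Coquelicot.
Open Scope R_scope.

Definition catalan (n : nat) : R := Binomial.C (2 * n) n / INR (n + 1).

Definition catalan_integrand (n : nat) (t : R) : R :=
  t ^ 2 / (t ^ 2 + 1 / 4) ^ 2 *
  ((2 - 1 / sqrt (t ^ 2 + 1 / 4)) ^ (n - 1) +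
   (2 + 1 / sqrt (t ^ 2 + 1 / 4)) ^ (n - 1)).

(* Substituting t = tan(θ)/2 gives 1/sqrt(t^2 + 1/4) = 2 cos θ and
   t^2/(t^2 + 1/4)^2 dt = 2 sin^2 θ dθ, so for n = m + 1 the integral becomes
   2^(m+1) ∫_0^(π/2) sin^2 θ ((1 + cos θ)^m + (1 - cos θ)^m) dθ.
   Differentiating sin^3 θ ((1 + cos θ)^k - (1 - cos θ)^k), which vanishes at
   0 and π/2, shows that these trigonometric integrals grow by the factor
   (2k + 3)/(k + 3) from k to k + 1, which is the ratio C_(k+2) / (2 C_(k+1));
   for m = 0 the integral is 2 ∫_0^(π/2) sin^2 θ dθ = π = π C_1. *)
From Stdlib Require Import Reals Nsatz Lra Lia Factorial.
From Coquelicot Require Import Coquelicot.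
Open Scope R_scope.

Lemma is_RInt_gen_at_point_derive {Fb : (R -> Prop) -> Prop} {FFb : Filter Fb}
    (f F : R -> R) (a L : R) :
  (forall x, is_derive F x (f x)) -> (forall x, continuous f x) ->
  filterlim F Fb (locally L) ->
  is_RInt_gen f (at_point a) Fb (L - F a).
Proof.
intros HF Hf HL.
assert (HL' : filterlim (fun b => F b - F a) Fb (locally (L - F a))).
{ apply (filterlim_comp _ _ _ F (fun y => y - F a) Fb (locally L)); [exact HL|].
  apply (@ex_derive_continuous R_AbsRing R_NormedModule (fun y => y - F a) L).
  auto_derive. trivial. }
apply filterlimi_lim_ext with (f := fun ab => F (snd ab) - F (fst ab)).
- intros [a' b]; simpl. apply (is_RInt_derive F); intros; [apply HF | apply Hf].
- intros P HP. apply HL' in HP.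
  apply Filter_prod with (Q := fun a' => a' = a) (R := fun b => P (F b - F a)).
  + reflexivity.
  + exact HP.
  + intros a' b -> Hb. exact Hb.
Qed.

Lemma filterlim_atan_pinfty : filterlim atan (Rbar_locally p_infty) (locally (PI / 2)).
Proof.
apply filterlim_ext_loc with (f := fun y => PI / 2 - atan (/ y)).
- exists 0. intros y Hy. rewrite atan_inv by lra. ring.
- apply (filterlim_comp _ _ _ Rinv (fun z => PI / 2 - atan z) _ (locally 0)).
  + apply (is_lim_inv (fun y => y) p_infty p_infty); [apply is_lim_id | discriminate].
  + set (g := fun z => PI / 2 - atan z).
    replace (PI / 2) with (g 0) by (unfold g; rewrite atan_0; ring).
    apply (@ex_derive_continuous R_AbsRing R_NormedModule).
    unfold g. auto_derive. trivial.
Qed.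

Lemma catalan_1 : catalan 1 = 1.
Proof. unfold catalan, Binomial.C. simpl. field. Qed.

Lemma catalan_S k : catalan (S k) * (INR k + 2) = 2 * (2 * INR k + 1) * catalan k.
Proof.
unfold catalan, Binomial.C.
replace (2 * S k)%nat with (S (S (2 * k))) by lia.
replace (S (S (2 * k)) - S k)%nat with (S k) by lia.
replace (2 * k - k)%nat with k by lia.
change (fact (S (S (2 * k)))) with (S (S (2 * k)) * (S (2 * k) * fact (2 * k)))%nat.
change (fact (S k)) with (S k * fact k)%nat.
pose proof (INR_fact_neq_0 k). pose proof (INR_fact_neq_0 (2 * k)).
pose proof (pos_INR k).
rewrite !mult_INR, !plus_INR, !S_INR, mult_INR. simpl INR.
field. repeat split; lra.
Qed.

Definition catalan_trig_integrand (m : nat) (θ : R) : R :=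
  sin θ ^ 2 * ((1 + cos θ) ^ m + (1 - cos θ) ^ m).

Definition catalan_trig_boundary (m : nat) (θ : R) : R :=
  sin θ ^ 3 * ((1 + cos θ) ^ m - (1 - cos θ) ^ m).

Fixpoint catalan_trig_primitive (m : nat) (θ : R) : R :=
  match m with
  | O => θ - sin θ * cos θ
  | S k => (catalan_trig_boundary k θ + (2 * INR k + 3) * catalan_trig_primitive k θ)
           / (INR k + 3)
  end.

Lemma is_derive_catalan_trig_boundary k θ :
  is_derive (catalan_trig_boundary k) θ
    ((INR k + 3) * catalan_trig_integrand (S k) θ
     - (2 * INR k + 3) * catalan_trig_integrand k θ).
Proof.
unfold catalan_trig_boundary, catalan_trig_integrand. auto_derive; [trivial|].
pose proof (sin2_cos2 θ) as Hpyth. unfold Rsqr in Hpyth.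
destruct k as [|k].
- simpl. nsatz.
- rewrite S_INR. simpl pred. simpl pow. nsatz.
Qed.

Lemma is_derive_catalan_trig_primitive m θ :
  is_derive (catalan_trig_primitive m) θ (catalan_trig_integrand m θ).
Proof.
induction m as [|k IH].
- simpl. unfold catalan_trig_integrand. auto_derive; [trivial|].
  pose proof (sin2_cos2 θ) as Hpyth. unfold Rsqr in Hpyth. simpl. nsatz.
- pose proof (pos_INR k).
  pose proof (is_derive_scal _ θ (/ (INR k + 3)) _
    (is_derive_plus _ _ θ _ _ (is_derive_catalan_trig_boundary k θ)
       (is_derive_scal _ θ (2 * INR k + 3) _ IH))) as HD.
  match type of HD with is_derive _ _ ?d =>
    replace (catalan_trig_integrand (S k) θ) with d
      by (unfold scal, plus; simpl; unfold mult; simpl; field; lra) end.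
  eapply is_derive_ext; [|exact HD].
  intros x. simpl. unfold plus; simpl. field. lra.
Qed.

Lemma catalan_trig_primitive_0 m : catalan_trig_primitive m 0 = 0.
Proof.
induction m as [|m IH]; simpl; [rewrite sin_0; ring|].
rewrite IH. unfold catalan_trig_boundary. rewrite sin_0. simpl.
field. pose proof (pos_INR m). lra.
Qed.

Lemma catalan_trig_primitive_PI2 m :
  catalan_trig_primitive m (PI / 2) = PI * catalan (S m) / 2 ^ S m.
Proof.
induction m as [|m IH].
- simpl. rewrite sin_PI2, cos_PI2, catalan_1. field.
- simpl catalan_trig_primitive. rewrite IH.
  unfold catalan_trig_boundary. rewrite sin_PI2, cos_PI2.
  pose proof (catalan_S (S m)) as Hrec. rewrite S_INR in Hrec.
  pose proof (pos_INR m). pose proof (pow_lt 2 m ltac:(lra)).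
  assert (Hc : catalan (S (S m)) =
               2 * (2 * (INR m + 1) + 1) * catalan (S m) / (INR m + 1 + 2)).
  { rewrite <- Hrec. field. lra. }
  rewrite Hc, Rplus_0_r, Rminus_0_r, Rminus_diag. simpl pow. field. lra.
Qed.

Lemma sqrt_1_plus_sqr_double x : sqrt (1 + (2 * x)²) = 2 * sqrt (x ^ 2 + 1 / 4).
Proof.
apply sqrt_lem_1.
- unfold Rsqr. nra.
- pose proof (sqrt_pos (x ^ 2 + 1 / 4)). lra.
- replace (2 * sqrt (x ^ 2 + 1 / 4) * (2 * sqrt (x ^ 2 + 1 / 4)))
    with (4 * (sqrt (x ^ 2 + 1 / 4) * sqrt (x ^ 2 + 1 / 4))) by ring.
  rewrite sqrt_sqrt; [unfold Rsqr; field | nra].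
Qed.

Lemma catalan_integrand_atan m x :
  catalan_integrand (S m) x =
  2 ^ S m * catalan_trig_integrand m (atan (2 * x)) * (2 / (1 + (2 * x) ^ 2)).
Proof.
unfold catalan_integrand, catalan_trig_integrand.
rewrite cos_atan, sin_atan, sqrt_1_plus_sqr_double.
replace (S m - 1)%nat with m by lia.
set (s := sqrt (x ^ 2 + 1 / 4)).
assert (Hs : 0 < s) by (apply sqrt_lt_R0; nra).
assert (Hss : s * s = x ^ 2 + 1 / 4) by (apply sqrt_sqrt; nra).
assert (Eplus : 2 ^ m * (1 + 1 / (2 * s)) ^ m = (2 + 1 / s) ^ m).
{ rewrite <- Rpow_mult_distr. f_equal. field. lra. }
assert (Eminus : 2 ^ m * (1 - 1 / (2 * s)) ^ m = (2 - 1 / s) ^ m).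
{ rewrite <- Rpow_mult_distr. f_equal. field. lra. }
rewrite <- Eplus, <- Eminus, <- Hss. simpl pow. unfold Rsqr.
replace (1 + 2 * x * (2 * x * 1)) with (4 * (s * s)) by (rewrite Hss; field).
field. lra.
Qed.

Lemma continuous_catalan_integrand n x : continuous (catalan_integrand n) x.
Proof.
apply (@ex_derive_continuous R_AbsRing R_NormedModule).
unfold catalan_integrand. auto_derive.
assert (Hpos : 0 < x ^ 2 + 1 / 4) by nra.
assert (0 < sqrt (x ^ 2 + 1 / 4)) by (apply sqrt_lt_R0; lra).
simpl in *. repeat split; try apply Rgt_not_eq; nra.
Qed.

Definition catalan_primitive (m : nat) (x : R) : R :=
  2 ^ S m * catalan_trig_primitive m (atan (2 * x)).

Lemma is_derive_catalan_primitive m x :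
  is_derive (catalan_primitive m) x (catalan_integrand (S m) x).
Proof.
rewrite catalan_integrand_atan.
assert (Hatan : is_derive (fun x => atan (2 * x)) x (2 / (1 + (2 * x) ^ 2))).
{ auto_derive; [trivial|]. field. nra. }
pose proof (is_derive_scal _ x (2 ^ S m) _
  (is_derive_comp _ _ x _ _ (is_derive_catalan_trig_primitive m _) Hatan)) as HD.
match type of HD with is_derive _ _ ?d =>
  replace (2 ^ S m * _ * _) with d by (unfold scal; simpl; unfold mult; simpl; ring) end.
exact HD.
Qed.

Lemma catalan_primitive_0 m : catalan_primitive m 0 = 0.
Proof.
unfold catalan_primitive. rewrite Rmult_0_r, atan_0, catalan_trig_primitive_0. ring.
Qed.

Lemma filterlim_catalan_primitive m :
  filterlim (catalan_primitive m) (Rbar_locally p_infty) (locally (PI * catalan (S m))).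
Proof.
set (g := fun θ => 2 ^ S m * catalan_trig_primitive m θ).
assert (Hg : g (PI / 2) = PI * catalan (S m)).
{ unfold g. rewrite catalan_trig_primitive_PI2. field. apply pow_nonzero. lra. }
rewrite <- Hg.
apply (filterlim_comp _ _ _ (fun x => atan (2 * x)) g _ (locally (PI / 2))).
- apply (filterlim_comp _ _ _ (fun x => 2 * x) atan _ (Rbar_locally p_infty)).
  + intros P [M HM]. exists (M / 2). intros x Hx. apply HM. lra.
  + exact filterlim_atan_pinfty.
- apply (@ex_derive_continuous R_AbsRing R_NormedModule).
  eexists. apply is_derive_scal, is_derive_catalan_trig_primitive.
Qed.

Theorem mainTheorem1 (n : nat) (hn : (1 <= n)%nat) :
  exists I : R,
    is_RInt_gen (catalan_integrand n) (at_point 0) (Rbar_locally p_infty) I /\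
    catalan n = / PI * I.
Proof.
destruct n as [|m]; [lia|].
exists (PI * catalan (S m)). split.
- replace (PI * catalan (S m)) with (PI * catalan (S m) - catalan_primitive m 0)
    by (rewrite catalan_primitive_0; ring).
  apply is_RInt_gen_at_point_derive.
  + apply is_derive_catalan_primitive.
  + apply continuous_catalan_integrand.
  + apply filterlim_catalan_primitive.
- field. apply PI_neq0.
Qed.
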